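(* Let $\mu$ be a log-concave probability measure on $\mathbb R^n$, let $\psi$ be a convex function on $\mathbb R^n$ (with $\psi\in L_1(\mu)$) and let $m$ be a median of $\psi$ with respect to $\mu$. Then $$\mu\Big(\Big\{x:\psi(x)<m-t\int|\psi-m|\,d\mu\Big\}\Big)\leqslant\frac12\exp(-t/16)$$ for all $t>0$. *)

From HB Require Import structures.
From mathcomp Require Import all_boot all_order all_algebra.
From mathcomp Require Import all_classical all_reals all_analysis.
Set Implicit Arguments. Unset Strict Implicit. Unset Printing Implicit Defensive.
Import Order.TTheory GRing.Theory Num.Theory.
Import numFieldNormedType.Exports.
Local Open Scope classical_set_scope.
Local Open Scope ring_scope.

(* R^n as row vectors with the usual (product) topology, equipped with the
   Borel sigma-algebra (generated by the open sets). *)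
Definition Rn (R : realType) (n : nat) : Type :=
  g_sigma_algebraType (@open 'rV[R]_n).

HB.instance Definition _ (R : realType) (n : nat) :=
  Measurable.on (Rn R n).

Definition mink_comb (R : realType) (n : nat) (l : R) (A B : set 'rV[R]_n)
  : set 'rV[R]_n :=
  [set l *: a + (1 - l) *: b | a in A & b in B].

(* Borell's definition of a log-concave measure: for all compact A, B and
   0 < l < 1,  mu(l A + (1-l) B) >= mu(A)^l mu(B)^(1-l). *)
Definition log_concave (R : realType) (n : nat)
  (mu : probability (Rn R n) R) : Prop :=
  forall (l : R) (A B : set 'rV[R]_n), 0 < l < 1 ->
    compact A -> compact B ->
    (fine (mu A)) `^ l * (fine (mu B)) `^ (1 - l)
      <= fine (mu (mink_comb l A B)).

Definition convex_fun (R : realType) (n : nat) (psi : 'rV[R]_n -> R) : Prop :=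
  forall (x y : 'rV[R]_n) (l : R), 0 <= l <= 1 ->
    psi (l *: x + (1 - l) *: y) <= l * psi x + (1 - l) * psi y.

Definition is_median (R : realType) (n : nat) (mu : probability (Rn R n) R)
  (psi : 'rV[R]_n -> R) (m : R) : Prop :=
  ((1 / 2)%:E <= mu [set x | (psi x <= m)%R])%E /\
  ((1 / 2)%:E <= mu [set x | (m <= psi x)%R])%E.

From HB Require Import structures.
From mathcomp Require Import all_boot all_order all_algebra.
From mathcomp Require Import all_classical all_reals all_analysis.
From mathcomp Require Import measurable_realfun ring lra.
Import Order.TTheory GRing.Theory Num.Theory.
Import numFieldNormedType.Exports.
Local Open Scope classical_set_scope.
Local Open Scope ring_scope.

(* A convex function on R^n is continuous, so its sublevel sets are closed and
   can be exhausted by compact sets, on which log-concavity applies.  Put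
   D = \int |psi - m| and lam = 9 / (2t + 9).  By Markov's inequality
   mu{psi <= m + 4D} >= 3/4 > 7/10, and by convexity
   lam {psi <= m - tD} + (1 - lam) {psi <= m + 4D} lies in {psi < m}, whose
   measure is at most 1/2 because m is a median.  Log-concavity then gives
   mu{psi <= m - tD}^lam (7/10)^(1 - lam) <= 1/2, and this forces
   mu{psi <= m - tD} <= exp(-t/16) / 2.  If D = 0, then psi = m almost
   everywhere and {psi < m} is null. *)

Section convex_fun_theory.
Context {R : realType} {n : nat} {psi : 'rV[R]_n -> R}.
Hypothesis psi_cvx : convex_fun psi.

Lemma convex_fun_comb (a b : R) (x y : 'rV[R]_n) : 0 <= a -> 0 <= b -> a + b = 1 ->
  psi (a *: x + b *: y) <= a * psi x + b * psi y.
Proof.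
move=> a0 b0 ab1; have -> : b = 1 - a by rewrite -ab1 addrAC subrr add0r.
by apply: psi_cvx; rewrite a0 /=; lra.
Qed.

Lemma convex_fun_avg k (y : 'I_k -> 'rV[R]_n) : (0 < k)%N ->
  psi (k%:R^-1 *: \sum_i y i) <= k%:R^-1 * \sum_i psi (y i).
Proof.
elim: k y => [//|[|k] IHk] y _; first by rewrite !big_ord1 invr1 scale1r mul1r.
rewrite big_ord_recr [X in _ <= _ * X]big_ord_recr /=.
set S := \sum_(i < k.+1) _; set T := \sum_(i < k.+1) _.
have k1_gt0 : 0 < k.+1%:R :> R by rewrite ltr0n.
have k2_gt0 : 0 < k.+2%:R :> R by rewrite ltr0n.
have -> : k.+2%:R^-1 *: (S + y ord_max) =
    (k.+1%:R / k.+2%:R) *: (k.+1%:R^-1 *: S) + k.+2%:R^-1 *: y ord_max.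
  by rewrite scalerDr scalerA mulrAC mulfV ?mul1r ?gt_eqF.
apply: le_trans (convex_fun_comb _ _ _ _ _ _ _) _.
- by rewrite divr_ge0 ?ltW.
- by rewrite invr_ge0 ltW.
- by rewrite -[X in _ + X]mul1r -mulrDl natr1 mulfV ?gt_eqF.
rewrite mulrDr lerD2r; apply: le_trans (ler_wpM2l _ (IHk _ isT)) _.
  by rewrite divr_ge0 ?ltW.
by rewrite -/T mulrA [X in X * T]mulrAC mulfV ?gt_eqF // mul1r.
Qed.

Lemma convex_fun_le_max (x v : 'rV[R]_n) (a : R) : `|a| <= 1 ->
  psi (x + a *: v) <= Num.max (psi (x + v)) (psi (x - v)).
Proof.
rewrite ler_norml => /andP[a_ge a_le].
have -> : x + a *: v = ((1 + a) / 2) *: (x + v) + ((1 - a) / 2) *: (x - v).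
  by apply/rowP => j; rewrite !mxE; field.
apply: le_trans (convex_fun_comb _ _ _ _ _ _ _) _; [lra | lra | by field |].
set M := Num.max _ _.
have le_M1 : psi (x + v) <= M by rewrite le_max lexx.
have le_M2 : psi (x - v) <= M by rewrite le_max lexx orbT.
have : 0 <= (1 + a) / 2 by lra.
have : 0 <= (1 - a) / 2 by lra.
nra.
Qed.

Lemma convex_fun_cube_bounded (x : 'rV[R]_n) :
  exists M, forall h : 'rV[R]_n, (forall j, `|h ord0 j| <= 1) -> psi (x + h) <= M.
Proof.
have [n0|n_gt0] := posnP n.
  exists (psi x) => h _; suff -> : h = 0 by rewrite addr0.
  by apply/rowP => i; have := ltn_ord i; rewrite {2}n0.
pose N : R := n%:R; pose e (i : 'I_n) : 'rV[R]_n := delta_mx 0 i.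
pose F i := `|psi (x + N *: e i)| + `|psi (x - N *: e i)|.
exists (\sum_i F i) => h h_le1.
have N_gt0 : 0 < N by rewrite ltr0n.
have le_sumF j : F j <= \sum_i F i.
  by rewrite (bigD1 j) //= lerDl sumr_ge0 // => i _; rewrite addr_ge0.
(* [x + h] is the barycentre of the points [x + N h_i e_i], each of which lies on
   the segment [x - N e_i, x + N e_i]. *)
have -> : x + h = N^-1 *: \sum_i (x + (h 0 i) *: (N *: e i)).
  rewrite big_split /= sumr_const card_ord -scaler_nat scalerDr scalerA.
  rewrite mulVf ?gt_eqF // scale1r scaler_sumr; congr (_ + _).
  rewrite [LHS]row_sum_delta; apply: eq_bigr => i _.
  by rewrite !scalerA mulrCA mulVf ?gt_eqF // mulr1.
apply: le_trans (convex_fun_avg _ _ n_gt0) _.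
apply: le_trans (_ : N^-1 * \sum_(i < n) \sum_j F j <= _); last first.
  by rewrite sumr_const card_ord -mulr_natr mulrCA mulVf ?gt_eqF // mulr1.
apply: ler_wpM2l; first by rewrite invr_ge0 ltW.
apply: ler_sum => i _; apply: le_trans (le_sumF i).
apply: le_trans (convex_fun_le_max _ _ _ (h_le1 i)) _.
rewrite ge_max; apply/andP; split; apply: le_trans (ler_norm _) _.
  by rewrite lerDl.
by rewrite lerDr.
Qed.

Lemma convex_fun_dist_le (x y : 'rV[R]_n) (M th : R) :
  (forall h : 'rV[R]_n, (forall j, `|h ord0 j| <= 1) -> psi (x + h) <= M) ->
  0 < th <= 1 -> (forall j, `|y ord0 j - x ord0 j| <= th) ->
  `|psi y - psi x| <= th * (M - psi x).
Proof.
move=> psi_le_M /andP[th_gt0 th_le1] yx_le_th.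
pose g := th^-1 *: (y - x).
have g_le1 j : `|g ord0 j| <= 1.
  by rewrite !mxE normrM normfV (gtr0_norm th_gt0) mulrC ler_pdivrMr // mul1r.
have Ng_le1 j : `|(- g) ord0 j| <= 1 by rewrite mxE normrN.
have upper : psi y <= (1 - th) * psi x + th * M.
  have -> : y = (1 - th) *: x + th *: (x + g).
    by apply/rowP => j; rewrite !mxE; field; rewrite gt_eqF.
  apply: le_trans (convex_fun_comb _ _ _ _ _ _ _) _; [lra | lra | lra |].
  by rewrite lerD2l ler_wpM2l ?psi_le_M // ltW.
have lower : psi x <= (1 + th)^-1 * psi y + (th / (1 + th)) * M.
  have -> : x = (1 + th)^-1 *: y + (th / (1 + th)) *: (x + - g).
    by apply/rowP => j; rewrite !mxE; field; rewrite !gt_eqF //; lra.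
  apply: le_trans (convex_fun_comb _ _ _ _ _ _ _) _.
  - by rewrite invr_ge0; lra.
  - by rewrite divr_ge0 //; lra.
  - by field; rewrite gt_eqF //; lra.
  by rewrite lerD2l ler_wpM2l ?psi_le_M // divr_ge0 //; lra.
have {lower} lower : psi x * (1 + th) <= psi y + th * M.
  rewrite -ler_pdivlMr; last lra.
  suff -> : (psi y + th * M) / (1 + th) = (1 + th)^-1 * psi y + th / (1 + th) * M.
    by [].
  by field; rewrite gt_eqF //; lra.
rewrite ler_norml; apply/andP; split; nra.
Qed.

Lemma convex_fun_continuous : continuous psi.
Proof.
move=> x; have [M psi_le_M] := convex_fun_cube_bounded x.
have psix_le_M : psi x <= M.
  by rewrite -[x]addr0 psi_le_M // => j; rewrite mxE normr0.
apply/(@cvgrPdist_lt _ _ _ (nbhs x) (nbhs_filter x)) => eps eps_gt0.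
pose th := Num.min 1 (eps / (M - psi x + 1)).
have th_gt0 : 0 < th by rewrite lt_min ltr01 divr_gt0 //; lra.
have th_le1 : th <= 1 by rewrite ge_min lexx.
have th_small : th * (M - psi x) < eps.
  have : th <= eps / (M - psi x + 1) by rewrite ge_min lexx orbT.
  rewrite ler_pdivlMr; [nra | lra].
apply/nbhs_ballP; exists th => // y [_ xy_lt_th].
rewrite distrC; apply: le_lt_trans th_small.
apply: convex_fun_dist_le => //; first by rewrite th_gt0.
by move=> j; rewrite distrC ltW // xy_lt_th.
Qed.

Lemma mink_comb_sublevel (l a b : R) :
  0 <= l <= 1 ->
  mink_comb l [set x | psi x <= a] [set x | psi x <= b] `<=`
    [set x | psi x <= l * a + (1 - l) * b].
Proof.
move=> /andP[l_ge0 l_le1] _ [u psi_u [v psi_v <-]] /=.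
apply: le_trans (psi_cvx _ _ _ _) _; first by rewrite l_ge0.
by rewrite lerD // ler_wpM2l // subr_ge0.
Qed.

End convex_fun_theory.

Section continuous_level_sets.
Context {T : topologicalType} {R : realFieldType} {f : T -> R}.
Hypothesis f_cont : continuous f.

Lemma sublevel_closed c : closed [set x | f x <= c].
Proof.
by apply: (preimage_closed (D := [set y | y <= c])) => [x _|];
  [exact: f_cont | exact: closed_le].
Qed.

Lemma strict_sublevel_open c : open [set x | f x < c].
Proof.
by apply: (open_comp (D := [set y | y < c])) => [x _|];
  [exact: f_cont | exact: open_lt].
Qed.

Lemma strict_superlevel_open c : open [set x | c < f x].
Proof.
by apply: (open_comp (D := [set y | c < y])) => [x _|];
  [exact: f_cont | exact: open_gt].
Qed.

End continuous_level_sets.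

Section probability_abs_deviation.
Context {d : measure_display} {T : measurableType d} {R : realType}.
Context {mu : probability T R} {f : T -> R}.
Hypothesis f_int : mu.-integrable setT (EFin \o f).

Let f_mf : measurable_fun setT (EFin \o f).
Proof. by case/integrableP: f_int. Qed.

Let integral_abs : (\int[mu]_x `|(f x)%:E| = (\int[mu]_x `|f x|)%:E)%E.
Proof.
case/integrableP: f_int => _ abs_fin; rewrite /Rintegral fineK //.
by rewrite ge0_fin_numE // integral_ge0.
Qed.

Lemma Rintegral_abs_eq0_negligible :
  \int[mu]_x `|f x| = 0 -> mu.-negligible [set x | f x != 0].
Proof.
move=> I0; have := integral_abs; rewrite I0.
move=> /(ae_eq_integral_abs mu measurableT f_mf) f_ae0.
apply: negligibleS f_ae0 => x /= fx_neq0 /(_ I) [fx0].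
by rewrite fx0 eqxx in fx_neq0.
Qed.

Lemma markov_le_Rintegral_abs (E : set T) (a : R) : measurable E -> 0 < a ->
  (forall x, E x -> a <= `|f x|) -> a * fine (mu E) <= \int[mu]_x `|f x|.
Proof.
move=> mE a_gt0 a_le_f; pose E' := [set x | (a%:E <= `|(f x)%:E|)%E].
have mE' : measurable E'.
  rewrite -[E']setTI.
  apply: (emeasurable_fun_c_infty (f := fun x => `|(f x)%:E|%E)) => //.
  exact: measurableT_comp f_mf.
have : (a%:E * mu (setT `&` E') <= \int[mu]_x `|(f x)%:E|)%E.
  exact: le_integral_abse.
rewrite setTI integral_abs -(fineK (fin_num_measure mu _ mE')) -EFinM lee_fin.
apply: le_trans; apply: ler_wpM2l; first exact: ltW.
apply: fine_le; rewrite ?fin_num_measure //.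
by apply: (le_measure mu _ _ a_le_f); rewrite inE.
Qed.

End probability_abs_deviation.

Section Rn_measure.
Context {R : realType} {n : nat}.
Implicit Types A B : set 'rV[R]_n.

Lemma open_measurable_Rn {A} : open A -> measurable (A : set (Rn R n)).
Proof. exact: sub_sigma_algebra. Qed.

Lemma closed_measurable_Rn {A} : closed A -> measurable (A : set (Rn R n)).
Proof.
move=> cA; rewrite -[A]setCK; apply: measurableC.
by apply: open_measurable_Rn; exact: closed_openC.
Qed.

Lemma compact_measurable_Rn {A} : compact A -> measurable (A : set (Rn R n)).
Proof. by move=> cA; apply: closed_measurable_Rn; apply: compact_closed cA. Qed.

Lemma closed_inner_compact (mu : probability (Rn R n) R) {A} {a : \bar R} :
  closed A -> (a < mu A)%E -> exists K, [/\ compact K, K `<=` A & (a < mu K)%E].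
Proof.
move=> cA a_lt_muA; pose F k := A `&` [set x : 'rV[R]_n | `|x| <= k%:R].
have cF k : compact (F k).
  apply: bounded_closed_compact.
    exists k%:R; split => [|M kM x [_ xk]]; first exact: num_real.
    exact: le_trans xk (ltW kM).
  apply: closedI cA _.
  apply: (@preimage_closed _ _ (@Num.norm _ 'rV[R]_n) [set y | y <= k%:R]) => [x _|].
    exact: norm_continuous.
  exact: closed_le.
have bigcupF : \bigcup_k F k = A.
  apply/seteqP; split => [x [k _ []] //|x Ax].
  by exists (Num.truncn `|x|).+1 => //; split => //=; rewrite ltW // truncnS_gt.
have ndF : nondecreasing_seq F.
  move=> k l kl; apply/subsetPset => x [Ax xk]; split => //=.
  by apply: le_trans xk _; rewrite ler_nat.
have := nondecreasing_cvg_mu (mu := mu) (fun k => compact_measurable_Rn (cF k)) _ ndF.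
rewrite bigcupF => /(_ (closed_measurable_Rn cA)) muF_cvg.
have [k _ a_lt_muF] :=
  muF_cvg _ (open_nbhs_nbhs (conj (open_ereal_gt_ereal (x := a)) a_lt_muA)).
exists (F k); split => //; first exact: subIsetl.
exact: (a_lt_muF _ (leqnn k)).
Qed.

Lemma mink_comb_compact (l : R) {A B} :
  compact A -> compact B -> compact (mink_comb l A B).
Proof.
move=> cA cB.
have -> : mink_comb l A B =
    (fun p : 'rV[R]_n * 'rV[R]_n => l *: p.1 + (1 - l) *: p.2) @` (A `*` B).
  apply/seteqP; split => [_ [a Aa [b Bb <-]]|_ [[a b] [/= Aa Bb] <-]].
    by exists (a, b).
  by exists a => //; exists b.
apply: continuous_compact; last exact: compact_setX.
apply: continuous_subspaceT => p.
by apply: cvgD; apply: cvgZl_tmp; [exact: cvg_fst | exact: cvg_snd].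
Qed.

Lemma log_concave_closed {mu : probability (Rn R n) R} {l : R} {A B S : set 'rV[R]_n}
    {a b : R} :
  log_concave mu -> 0 < l < 1 -> closed A -> closed B ->
  measurable (S : set (Rn R n)) -> mink_comb l A B `<=` S ->
  0 <= a -> 0 <= b -> (a%:E < mu A)%E -> (b%:E < mu B)%E ->
  a `^ l * b `^ (1 - l) <= fine (mu S).
Proof.
move=> mu_lc l01 cA cB mS ABS a_ge0 b_ge0 a_lt_muA b_lt_muB.
have [K [cK KA a_lt_muK]] := closed_inner_compact mu cA a_lt_muA.
have [L [cL LB b_lt_muL]] := closed_inner_compact mu cB b_lt_muB.
have fineK_mu C : measurable (C : set (Rn R n)) -> (fine (mu C))%:E = mu C.
  by move=> mC; rewrite fineK // fin_num_measure.
rewrite -fineK_mu ?lte_fin in a_lt_muK; last exact: compact_measurable_Rn.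
rewrite -fineK_mu ?lte_fin in b_lt_muL; last exact: compact_measurable_Rn.
have /andP[l_gt0 l_lt1] := l01.
apply: (@le_trans _ _ (fine (mu K) `^ l * fine (mu L) `^ (1 - l))).
  by apply: ler_pM; rewrite ?powR_ge0 // ge0_ler_powR ?nnegrE //; lra.
apply: le_trans (mu_lc _ _ _ l01 cK cL) _.
have mKL := compact_measurable_Rn (mink_comb_compact l cK cL).
rewrite -lee_fin !fineK_mu //; apply: le_measure; rewrite ?inE //.
move=> _ [u Ku [v Lv <-]]; apply: ABS; exists u; first exact: KA.
by exists v; first exact: LB.
Qed.

End Rn_measure.

Lemma half_lt_powR_mix {R : realType} (t : R) : 0 < t ->
  1 / 2 < (1 / 2 * expR (- t / 16)) `^ (9 / (2 * t + 9)) *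
          (7 / 10) `^ (1 - 9 / (2 * t + 9)).
Proof.
move=> t_gt0; set lam := 9 / (2 * t + 9).
have lam_gt0 : 0 < lam by rewrite divr_gt0 //; lra.
have lam_lt1 : lam < 1 by rewrite ltr_pdivrMr; lra.
have half_gt0 : 0 < 1 / 2 :> R by lra.
have a_gt0 : 0 < 1 / 2 * expR (- t / 16) by rewrite mulr_gt0 ?expR_gt0.
rewrite -ltr_ln ?posrE ?mulr_gt0 ?powR_gt0 //.
rewrite [ln (_ `^ _ * _)]lnM ?posrE ?powR_gt0 // !ln_powR.
rewrite [ln (_ * expR _)]lnM ?posrE ?expR_gt0 // expRK.
have ln_half : ln (1 / 2 : R) = - ln 2 by rewrite div1r lnV ?posrE.
have ln_7_10 : - ln 2 + 2 / 7 <= ln (7 / 10 : R).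
  have -> : (7 / 10 : R) = 1 / 2 * (1 - 2 / 7)^-1 by field.
  rewrite lnM ?posrE ?invr_gt0; [|lra..].
  rewrite ln_half lnV ?posrE; [|lra].
  by have := @le_ln1Dx R (- (2 / 7)); lra.
have gain : lam * (- t / 16) + (1 - lam) * (2 / 7) = t / (112 * (2 * t + 9)).
  by rewrite /lam; field; lra.
have : 0 < t / (112 * (2 * t + 9)) by rewrite divr_gt0 //; lra.
have : 0 <= (1 - lam) * (ln (7 / 10) - (- ln 2 + 2 / 7)) by apply: mulr_ge0; lra.
rewrite ln_half; lra.
Qed.

Section convex_median_deviation.
Context {R : realType} {n : nat} {mu : probability (Rn R n) R}.
Context {psi : 'rV[R]_n -> R} {m : R}.
Hypotheses (psi_cvx : convex_fun psi)
  (psi_int : mu.-integrable [set: Rn R n] (fun x => (psi x)%:E))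
  (psi_med : is_median mu psi m).

Local Notation dev := (\int[mu]_x `|psi x - m|).

Let psi_cont : continuous psi := convex_fun_continuous psi_cvx.

Let dev_int : mu.-integrable [set: Rn R n] (EFin \o (fun x => psi x - m)).
Proof.
have := integrableB measurableT psi_int (finite_measure_integrable_cst mu m measurableT).
by apply: eq_integrable => // x _; rewrite /= EFinB.
Qed.

Lemma median_lt_le_half : fine (mu [set x | psi x < m]) <= 1 / 2.
Proof.
have mS := open_measurable_Rn (strict_sublevel_open psi_cont m).
have [_] := psi_med; have -> : [set x | m <= psi x] = ~` [set x | psi x < m].
  by apply/seteqP; split => x /=; rewrite leNgt => /negP.
rewrite probability_setC // -(fineK (fin_num_measure mu _ mS)) -EFinB lee_fin.
lra.
Qed.

Lemma mu_lt_median_eq0 : dev = 0 -> mu [set x | psi x < m] = 0.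
Proof.
move=> /(Rintegral_abs_eq0_negligible dev_int) dev_null.
apply/negligibleP; first exact: open_measurable_Rn (strict_sublevel_open psi_cont m).
by apply: negligibleS dev_null => x /= psix_lt; rewrite subr_eq0 lt_eqF.
Qed.

Lemma markov_sublevel : 0 < dev ->
  ((7 / 10)%:E < mu [set x | psi x <= m + 4 * dev]%R)%E.
Proof.
move=> dev_gt0; pose C := [set x | m + 4 * dev < psi x].
have mC : measurable (C : set (Rn R n)) :=
  open_measurable_Rn (strict_superlevel_open psi_cont _).
have : 4 * dev * fine (mu C) <= dev.
  apply: (markov_le_Rintegral_abs dev_int _ _ mC) => [|x]; first lra.
  by rewrite /C /= => Cx; apply: le_trans (ler_norm _); lra.
have -> : [set x | psi x <= m + 4 * dev] = ~` C.
  by apply/seteqP; split => x /=; rewrite leNgt => /negP.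
rewrite probability_setC // -(fineK (fin_num_measure mu _ mC)) -EFinB lte_fin.
nra.
Qed.

Lemma mink_sublevels_lt_median (t : R) : 0 < t -> 0 < dev ->
  mink_comb (9 / (2 * t + 9))
    [set x | psi x <= m - t * dev] [set x | psi x <= m + 4 * dev]
    `<=` [set x | psi x < m].
Proof.
move=> t_gt0 dev_gt0; set lam := 9 / (2 * t + 9).
have lam01 : 0 <= lam <= 1 by apply/andP; split; rewrite /lam ?ler_pdivrMr ?divr_ge0; lra.
move=> x /(mink_comb_sublevel psi_cvx _ _ _ lam01) /= /le_lt_trans; apply.
have -> : lam * (m - t * dev) + (1 - lam) * (m + 4 * dev) = m - t * dev / (2 * t + 9).
  by rewrite /lam; field; lra.
by rewrite gtrBl divr_gt0 ?mulr_gt0 //; lra.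
Qed.

End convex_median_deviation.

Theorem theorem5p6 (R : realType) (n : nat) (mu : probability (Rn R n) R)
  (psi : 'rV[R]_n -> R) (m : R) :
  log_concave mu -> convex_fun psi ->
  mu.-integrable [set: Rn R n] (fun x => (psi x)%:E) ->
  is_median mu psi m ->
  forall t : R, 0 < t ->
    (mu [set x | (psi x < m - t * Rintegral mu [set: Rn R n] (fun x => `|psi x - m|))%R]
      <= (1 / 2 * expR (- t / 16))%:E)%E.
Proof.
move=> mu_lc psi_cvx psi_int psi_med t t_gt0.
have psi_cont := convex_fun_continuous psi_cvx.
set dev := Rintegral _ _ _; set a := 1 / 2 * expR (- t / 16).
have a_gt0 : 0 < a by rewrite mulr_gt0 ?expR_gt0.
have : 0 <= dev by apply: Rintegral_ge0.
rewrite le_eqVlt eq_sym => /predU1P[dev0|dev_gt0].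
  by rewrite dev0 mulr0 subr0 (mu_lt_median_eq0 psi_cvx psi_int dev0) lee_fin ltW.
rewrite leNgt; apply/negP => a_lt_mu.
set lam := 9 / (2 * t + 9).
have lam01 : 0 < lam < 1 by apply/andP; split; rewrite /lam ?ltr_pdivrMr ?divr_gt0; lra.
have a_lt_muA : (a%:E < mu [set x | psi x <= m - t * dev]%R)%E.
  apply: (lt_le_trans a_lt_mu); apply: (le_measure _ _ _ (fun x => @ltW _ _ _ _)).
    by rewrite inE; exact: open_measurable_Rn (strict_sublevel_open psi_cont _).
  by rewrite inE; exact: closed_measurable_Rn (sublevel_closed psi_cont _).
have := log_concave_closed mu_lc lam01
  (sublevel_closed psi_cont _) (sublevel_closed psi_cont _)
  (open_measurable_Rn (strict_sublevel_open psi_cont m))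
  (mink_sublevels_lt_median psi_cvx _ t_gt0 dev_gt0) (ltW a_gt0) _ a_lt_muA
  (markov_sublevel psi_cvx psi_int dev_gt0).
have := median_lt_le_half psi_cvx psi_med; have := half_lt_powR_mix t t_gt0.
rewrite -/lam -/a; lra.
Qed.
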